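(* Let $\{(X_i,d_i)\}_{i\in\mathbb{N}_0}$ be complete metric spaces, $C_i\subseteq X_i$ nonempty compact sets with $\mathrm{diam}(C_i)\le D$ for all $i$, and $T_i:X_i\to X_{i-1}$ ($i\in\mathbb{N}$) continuous maps with $T_i(C_i)\subseteq C_{i-1}$ and $s_i:=\mathrm{Lip}_{C_i}(T_i)<\infty$. If $\sum_{k=1}^\infty\prod_{i=1}^k s_i<\infty$, then there is a point $p\in C_0$ such that for every base sequence $\bar x$ the backward staircase trajectory $p_k(\bar x)$ converges to $p$.
   Context: For $T:X\to Y$ between metric spaces and $C\subseteq X$, $\mathrm{Lip}_C(T)=\sup_{a,b\in C,a\neq b}d_Y(T(a),T(b))/d_X(a,b)$. A base sequence is $\bar x=\{x_i\}_{i\in\mathbb{N}}$ with $x_i\in C_i$, and the backward staircase trajectory with respect to $\bar x$ is $p_k(\bar x)=T_1\circ T_2\circ\cdots\circ T_k(x_k)\in X_0$, $k\in\mathbb{N}$. *)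

From Stdlib Require Import Reals List.
Open Scope R_scope.

Definition ms_open {X : Metric_Space} (U : Base X -> Prop) : Prop :=
  forall x, U x -> exists r, r > 0 /\ forall y, dist X x y < r -> U y.

Definition ms_compact {X : Metric_Space} (C : Base X -> Prop) : Prop :=
  forall (I : Type) (U : I -> Base X -> Prop),
    (forall i, ms_open (U i)) ->
    (forall x, C x -> exists i, U i x) ->
    exists l : list I, forall x, C x -> exists i, In i l /\ U i x.

Definition ms_cauchy {X : Metric_Space} (u : nat -> Base X) : Prop :=
  forall eps, eps > 0 -> exists N, forall n m, (n >= N)%nat -> (m >= N)%nat ->
    dist X (u n) (u m) < eps.

Definition ms_converges {X : Metric_Space} (u : nat -> Base X) (l : Base X) : Prop :=
  forall eps, eps > 0 -> exists N, forall n, (n >= N)%nat -> dist X (u n) l < eps.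

Definition ms_complete (X : Metric_Space) : Prop :=
  forall u : nat -> Base X, ms_cauchy u -> exists l, ms_converges u l.

Definition ms_continuous {X Y : Metric_Space} (f : Base X -> Base Y) : Prop :=
  forall x eps, eps > 0 -> exists delta, delta > 0 /\
    forall y, dist X x y < delta -> dist Y (f x) (f y) < eps.

Definition diam_le {X : Metric_Space} (C : Base X -> Prop) (D : R) : Prop :=
  forall a b, C a -> C b -> dist X a b <= D.

(* s = Lip_C(T) = sup_{a,b in C, a<>b} d(T a, T b)/d(a, b), with the convention
   that the sup of the empty set of ratios (C a singleton) is 0; adding 0 to the
   set of (nonnegative) ratios does not change the sup otherwise. *)
Definition Lip_set {X Y : Metric_Space} (T : Base X -> Base Y) (C : Base X -> Prop)
  : R -> Prop :=
  fun r => r = 0 \/ exists a b, C a /\ C b /\ a <> b /\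
                    r = dist Y (T a) (T b) / dist X a b.

Definition is_Lip_const {X Y : Metric_Space} (T : Base X -> Base Y)
  (C : Base X -> Prop) (s : R) : Prop := is_lub (Lip_set T C) s.

(* prodS s k = s 0 * ... * s (k-1);  with s j = s_{j+1} this is prod_{i=1}^k s_i *)
Fixpoint prodS (s : nat -> R) (k : nat) : R :=
  match k with
  | O => 1
  | S k' => prodS s k' * s k'
  end.

(* Maps T k : X (k+1) -> X k  (this is T_{k+1} of the paper).
   compT T k y = T_1 (T_2 (... T_k y)) *)
Fixpoint compT (X : nat -> Metric_Space)
  (T : forall i, Base (X (S i)) -> Base (X i)) (k : nat) : Base (X k) -> Base (X O) :=
  match k as k0 return Base (X k0) -> Base (X O) with
  | O => fun y => y
  | S k' => fun y => compT X T k' (T k' y)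
  end.

Definition staircase (X : nat -> Metric_Space)
  (T : forall i, Base (X (S i)) -> Base (X i)) (x : forall i, Base (X i)) (k : nat)
  : Base (X O) := compT X T k (x k).

From Stdlib Require Import Reals List Lra Lia ClassicalEpsilon.
Open Scope R_scope.

(* On C_k the composite T_1 o ... o T_k
   is Lipschitz with constant s_1 ... s_k, so for base sequences x, y:
   - consecutive points satisfy d(p_k(x), p_(k+1)(x)) <= s_1...s_k * D, because
     x_k and T_(k+1)(x_(k+1)) both lie in C_k;
   - points of equal index satisfy d(p_k(x), p_k(y)) <= s_1...s_k * D.
   By the first estimate and summability of the products, the trajectory of one
   fixed base sequence is Cauchy, hence converges in the complete space X_0 to
   some p, which lies in C_0 because compact sets contain the limits of their
   convergent sequences.  By the second estimate, and since the terms of a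
   convergent series tend to 0, every other trajectory converges to p too. *)

Lemma Un_cv_scale (u : nat -> R) (l c : R) :
  Un_cv u l -> Un_cv (fun n => u n * c) (l * c).
Proof.
  intro Hu. apply (CV_mult u (fun _ => c)); [exact Hu|].
  intros eps Heps. exists O. intros n _.
  unfold R_dist. rewrite Rminus_diag, Rabs_R0. exact Heps.
Qed.

Lemma series_terms_vanish (a : nat -> R) (l : R) :
  Un_cv (fun n => sum_f_R0 a n) l -> Un_cv a 0.
Proof.
  intros Hsum eps Heps.
  destruct (CV_Cauchy _ (exist _ l Hsum) eps Heps) as [N HN].
  exists (S N). intros [| n] Hn; [lia |].
  specialize (HN (S n) n ltac:(lia) ltac:(lia)). unfold R_dist in *. simpl in HN.
  replace (a (S n) - 0) with (sum_f_R0 a n + a (S n) - sum_f_R0 a n) by ring.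
  exact HN.
Qed.

Lemma base_sequence_exists (X : nat -> Metric_Space) (C : forall i, Base (X i) -> Prop) :
  (forall i, exists x, C i x) -> exists x : forall i, Base (X i), forall i, C i (x i).
Proof.
  intro Hne.
  exists (fun i => proj1_sig (constructive_indefinite_description _ (Hne i))).
  intro i. exact (proj2_sig (constructive_indefinite_description _ (Hne i))).
Qed.

Lemma dist_self (X : Metric_Space) (a : Base X) : dist X a a = 0.
Proof. apply (dist_refl X). reflexivity. Qed.

Lemma dist_pos_neq (X : Metric_Space) (a b : Base X) : a <> b -> dist X a b > 0.
Proof.
  intro Hne. destruct (dist_pos X a b) as [Hpos | Hzero]; [lra |].
  exfalso. apply Hne, (dist_refl X). exact Hzero.
Qed.

Lemma Lip_const_nonneg {X Y : Metric_Space} (T : Base X -> Base Y) C s :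
  is_Lip_const T C s -> 0 <= s.
Proof. intros [Hub _]. apply Hub. left. reflexivity. Qed.

Lemma Lip_const_bound {X Y : Metric_Space} (T : Base X -> Base Y) C s :
  is_Lip_const T C s ->
  forall a b, C a -> C b -> dist Y (T a) (T b) <= s * dist X a b.
Proof.
  intros Hlip a b Ha Hb.
  pose proof (Lip_const_nonneg T C s Hlip) as Hs.
  destruct (classic (a = b)) as [-> | Hne].
  - rewrite !dist_self. lra.
  - pose proof (dist_pos_neq X a b Hne) as Hd.
    assert (Hratio : dist Y (T a) (T b) / dist X a b <= s).
    { destruct Hlip as [Hub _]. apply Hub. right. exists a, b. auto. }
    apply Rmult_le_compat_r with (r := dist X a b) in Hratio; [| lra].
    unfold Rdiv in Hratio. rewrite Rmult_assoc, Rinv_l in Hratio by lra. lra.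
Qed.

Lemma dist_le_partial_sums (X : Metric_Space) (u : nat -> Base X) (b : nat -> R) :
  (forall n, dist X (u n) (u (S n)) <= b n) ->
  forall n m, (n <= m)%nat ->
    dist X (u (S n)) (u (S m)) <= sum_f_R0 b m - sum_f_R0 b n.
Proof.
  intros Hstep n m Hnm. induction Hnm as [| m Hnm IH].
  - rewrite dist_self. lra.
  - pose proof (dist_tri X (u (S n)) (u (S (S m))) (u (S m))) as Htri.
    pose proof (Hstep (S m)) as Hlast. simpl. lra.
Qed.

Lemma cauchy_of_summable_steps (X : Metric_Space) (u : nat -> Base X)
  (b : nat -> R) (l : R) :
  (forall n, dist X (u n) (u (S n)) <= b n) ->
  Un_cv (fun n => sum_f_R0 b n) l -> ms_cauchy u.
Proof.
  intros Hstep Hsum eps Heps.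
  destruct (CV_Cauchy _ (exist _ l Hsum) eps Heps) as [N HN].
  exists (S N). intros [| n] [| m] Hn Hm; try lia.
  specialize (HN m n ltac:(lia) ltac:(lia)). unfold R_dist in HN.
  destruct (Nat.le_ge_cases n m) as [Hnm | Hmn].
  - pose proof (dist_le_partial_sums X u b Hstep n m Hnm) as Hd.
    pose proof (Rle_abs (sum_f_R0 b m - sum_f_R0 b n)). lra.
  - pose proof (dist_le_partial_sums X u b Hstep m n Hmn) as Hd.
    rewrite dist_sym.
    pose proof (Rle_abs (- (sum_f_R0 b m - sum_f_R0 b n))) as Habs.
    rewrite Rabs_Ropp in Habs. lra.
Qed.

Lemma converges_of_close (X : Metric_Space) (u v : nat -> Base X) (e : nat -> R) (p : Base X) :
  (forall n, dist X (v n) (u n) <= e n) -> Un_cv e 0 ->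
  ms_converges u p -> ms_converges v p.
Proof.
  intros Hclose He Hu eps Heps.
  destruct (Hu (eps / 2) ltac:(lra)) as [N1 HN1].
  destruct (He (eps / 2) ltac:(lra)) as [N2 HN2].
  exists (N1 + N2)%nat. intros n Hn.
  specialize (HN1 n ltac:(lia)). specialize (HN2 n ltac:(lia)).
  unfold R_dist in HN2. rewrite Rminus_0_r in HN2.
  pose proof (Rle_abs (e n)). pose proof (Hclose n).
  pose proof (dist_tri X (v n) p (u n)). lra.
Qed.

Lemma converges_of_shift (X : Metric_Space) (u : nat -> Base X) (p : Base X) :
  ms_converges (fun n => u (S n)) p -> ms_converges u p.
Proof.
  intros Hu eps Heps. destruct (Hu eps Heps) as [N HN].
  exists (S N). intros [| n] Hn; [lia |]. apply HN. lia.
Qed.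

(* A compact set contains the limit of any convergent sequence of its points:
   otherwise the open sets {z | d(z, p) > 1/(n+1)} would cover it without a
   finite subcover. *)
Lemma compact_contains_limit (X : Metric_Space) (K : Base X -> Prop)
  (u : nat -> Base X) (p : Base X) :
  ms_compact K -> (forall n, K (u n)) -> ms_converges u p -> K p.
Proof.
  intros Hcpt HuK Hu. apply NNPP. intro Hp.
  set (U := fun (n : nat) (z : Base X) => dist X z p > / INR (S n)).
  destruct (Hcpt nat U) as [L HL].
  - intros n z Hz. exists (dist X z p - / INR (S n)). split; [unfold U in Hz; lra |].
    intros y Hy. unfold U in *. pose proof (dist_tri X z p y). lra.
  - intros z Hz. assert (Hzp : z <> p) by (intros ->; contradiction).
    destruct (archimed_cor1 _ (dist_pos_neq X z p Hzp)) as [N [HN HN0]].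
    exists (pred N). unfold U. replace (S (pred N)) with N by lia. lra.
  - set (M := list_max L).
    assert (HM : forall i, In i L -> (i <= M)%nat).
    { apply Forall_forall, list_max_le. reflexivity. }
    destruct (Hu (/ INR (S M))) as [N HN].
    { apply Rinv_0_lt_compat, lt_0_INR. lia. }
    destruct (HL (u N) (HuK N)) as [i [Hi HUi]].
    specialize (HN N (le_n N)). unfold U in HUi.
    assert (/ INR (S M) <= / INR (S i)).
    { apply Rinv_le_contravar; [apply lt_0_INR; lia |].
      apply le_INR. specialize (HM i Hi). lia. }
    lra.
Qed.

Section Staircase.

Variable X : nat -> Metric_Space.
Variable C : forall i, Base (X i) -> Prop.
Variable T : forall i, Base (X (S i)) -> Base (X i).
Variable s : nat -> R.
Variable D : R.

Hypothesis Hmaps : forall i y, C (S i) y -> C i (T i y).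
Hypothesis Hlip : forall i, is_Lip_const (T i) (C (S i)) (s i).
Hypothesis Hdiam : forall i, diam_le (C i) D.

Lemma prodS_nonneg : forall k, 0 <= prodS s k.
Proof.
  induction k as [| k IH]; simpl; [lra |].
  apply Rmult_le_pos; [exact IH | exact (Lip_const_nonneg _ _ _ (Hlip k))].
Qed.

Lemma compT_maps : forall k y, C k y -> C O (compT X T k y).
Proof. induction k as [| k IH]; simpl; auto. Qed.

Lemma compT_lipschitz : forall k a b, C k a -> C k b ->
  dist (X O) (compT X T k a) (compT X T k b) <= prodS s k * dist (X k) a b.
Proof.
  induction k as [| k IH]; intros a b Ha Hb; simpl; [lra |].
  eapply Rle_trans; [apply IH; auto |].
  rewrite Rmult_assoc. apply Rmult_le_compat_l; [apply prodS_nonneg |].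
  apply (Lip_const_bound _ (C (S k))); auto.
Qed.

Lemma compT_diam : forall k a b, C k a -> C k b ->
  dist (X O) (compT X T k a) (compT X T k b) <= prodS s k * D.
Proof.
  intros k a b Ha Hb. eapply Rle_trans; [apply compT_lipschitz; auto |].
  apply Rmult_le_compat_l; [apply prodS_nonneg | apply Hdiam; auto].
Qed.

(* Consecutive points of a trajectory: p_(k+1)(x) = (T_1 o ... o T_k)(T_(k+1) x_(k+1)). *)
Lemma staircase_step (x : forall i, Base (X i)) : (forall i, C i (x i)) ->
  forall k, dist (X O) (staircase X T x k) (staircase X T x (S k)) <= prodS s k * D.
Proof. intros Hx k. unfold staircase. simpl. apply compT_diam; auto. Qed.

Lemma staircase_close (x y : forall i, Base (X i)) :
  (forall i, C i (x i)) -> (forall i, C i (y i)) ->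
  forall k, dist (X O) (staircase X T x k) (staircase X T y k) <= prodS s k * D.
Proof. intros Hx Hy k. apply compT_diam; auto. Qed.

End Staircase.

Theorem mainTheorem7
  (X : nat -> Metric_Space)
  (C : forall i, Base (X i) -> Prop)
  (D : R)
  (T : forall i, Base (X (S i)) -> Base (X i))
  (s : nat -> R)
  (Hcomplete : forall i, ms_complete (X i))
  (Hnonempty : forall i, exists x, C i x)
  (Hcompact : forall i, ms_compact (C i))
  (Hdiam : forall i, diam_le (C i) D)
  (Hcont : forall i, ms_continuous (T i))
  (Hmaps : forall i y, C (S i) y -> C i (T i y))
  (Hlip : forall i, is_Lip_const (T i) (C (S i)) (s i))
  (Hsum : exists l, Un_cv (fun n => sum_f_R0 (fun k => prodS s (S k)) n) l) :
  exists p : Base (X O), C O p /\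
    forall x : forall i, Base (X i), (forall i, C i (x i)) ->
      ms_converges (staircase X T x) p.
Proof.
  destruct Hsum as [l Hl].
  set (b := fun n => prodS s (S n) * D).
  assert (Hb_sum : Un_cv (fun n => sum_f_R0 b n) (l * D)).
  { intros eps Heps. destruct (Un_cv_scale _ _ D Hl eps Heps) as [N HN].
    exists N. intros n Hn. unfold b. rewrite <- scal_sum, Rmult_comm. exact (HN n Hn). }
  assert (Hb_vanish : Un_cv b 0).
  { rewrite <- (Rmult_0_l D). apply Un_cv_scale, (series_terms_vanish _ _ Hl). }
  destruct (base_sequence_exists X C Hnonempty) as [x0 Hx0].
  set (q := fun n => staircase X T x0 (S n)).
  assert (Hq_cauchy : ms_cauchy q).
  { apply (cauchy_of_summable_steps _ q b (l * D)); [| exact Hb_sum].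
    intro n. apply (staircase_step X C T s D Hmaps Hlip Hdiam x0 Hx0). }
  destruct (Hcomplete O q Hq_cauchy) as [p Hp].
  exists p. split.
  - apply (compact_contains_limit _ _ q p (Hcompact O)); [| exact Hp].
    intro n. apply (compT_maps X C T Hmaps). exact (Hx0 _).
  - intros x Hx. apply converges_of_shift.
    apply (converges_of_close _ q _ b p); [| exact Hb_vanish | exact Hp].
    intro n. apply (staircase_close X C T s D Hmaps Hlip Hdiam x x0 Hx Hx0).
Qed.
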